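(* Consider the two-stage cooperative cellular/D2D recovery model described in the context, with lossless links in the second stage. For any network coding scheme used in the second stage, the packet completion time satisfies \[ T \geq \left\lceil \max\Big(|\mathcal{M}_c|,\ \tfrac{1}{2}\max_{n \in \mathcal{N}} |\mathcal{W}_n|\Big) \right\rceil . \]
   Context: Model: a set $\mathcal{N}$ of $N\ge 2$ cooperating mobile devices want a common finite set $\mathcal{M}$ of packets. After a lossy first-stage cellular broadcast, device $n$ holds its Has set $\mathcal{H}_n\subseteq\mathcal{M}$ and misses its Wants set $\mathcal{W}_n=\mathcal{M}\setminus\mathcal{H}_n$; every packet of $\mathcal{M}$ is wanted by some device; $\mathcal{M}_c=\bigcap_{n\in\mathcal{N}}\mathcal{W}_n$. In the second stage time is slotted; in each slot the source (holding all packets) may broadcast one coded packet over cellular links to all devices, and simultaneously one device may broadcast over D2D links to all other devices one coded packet formed from packets it holds; all second-stage transmissions are received without loss. The packet completion time $T$ is the number of second-stage slots until every device has decoded all packets in its Wants set. *)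

From mathcomp Require Import all_boot all_order all_algebra.
Set Implicit Arguments. Unset Strict Implicit. Unset Printing Implicit Defensive.

Section Model.
(* N : devices, P : the packet set M, A : packet alphabet (packet contents). *)
Variables (N P A : finType) (H : N -> {set P}).

Definition Wants (n : N) : {set P} := ~: H n.
Definition Mc : {set P} := \bigcap_(n : N) Wants n.

Definition content := {ffun P -> A}.

Definition agree_on (S : {set P}) (x y : content) : Prop :=
  forall p, p \in S -> x p = y p.

(* A (general, possibly nonlinear) second-stage network coding scheme.
   Slots are numbered 0,1,2,...  In slot t:
   - the source broadcasts the coded packet [src t x] (a function of all packets),
   - device [sched t] (if any) broadcasts the coded packet [d2d t x]. *)
Record scheme := Scheme {
  sched : nat -> option N;
  src : nat -> content -> A;
  d2d : nat -> content -> A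
}.

Definition received (S : scheme) (n : N) (s : nat) (x : content) : A * option A :=
  (src S s x,
   match sched S s with
   | Some m => if m != n then Some (d2d S s x) else None
   | None => None
   end).

Definition same_view (S : scheme) (n : N) (t : nat) (x y : content) : Prop :=
  agree_on (H n) x y /\ forall s, s < t -> received S n s x = received S n s y.

(* Admissibility: a D2D transmission in slot t by device n is formed only from
   what n knows at that time (its Has set and everything received before). *)
Definition admissible (S : scheme) : Prop :=
  forall t n, sched S t = Some n ->
    forall x y, same_view S n t x y -> d2d S t x = d2d S t y.

Definition decoded (S : scheme) (n : N) (t : nat) : Prop :=
  forall x y, same_view S n t x y -> agree_on (Wants n) x y.

Definition completed (S : scheme) (t : nat) : Prop := forall n, decoded S n t.

End Model.

From mathcomp Require Import all_boot all_order all_algebra.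
Import Order.TTheory GRing.Theory Num.Theory.

Set Implicit Arguments.
Unset Strict Implicit.
Unset Printing Implicit Defensive.

(* Device n must tell apart the |A|^|W_n| assignments
   of its wanted packets, while in T slots it observes at most |A|^(2T)
   different cellular and D2D transcripts; as |A| >= 2, |W_n| <= 2T.
   The packets of M_c are held by nobody, so D2D transmissions, being
   functions of Has sets and earlier transmissions, carry no information
   about them: by induction on the slots, two contents that differ only on
   M_c and share their cellular transcript look the same to every device.
   So the |A|^|M_c| assignments of M_c must be separated by the |A|^T
   cellular transcripts alone, and |M_c| <= T. *)

Lemma agree_onS (P A : finType) (S1 S2 : {set P}) (x y : content P A) :
  S1 \subset S2 -> agree_on S2 x y -> agree_on S1 x y.
Proof. by move=> /subsetP sS12 xy p /sS12; apply: xy. Qed.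

Lemma agree_on_setC_eq (P A : finType) (S : {set P}) (x y : content P A) :
  agree_on S x y -> agree_on (~: S) x y -> x = y.
Proof.
move=> xyS xySC; apply/ffunP => p.
by case: (boolP (p \in S)) => [/xyS | pS]; last by apply: xySC; rewrite in_setC.
Qed.

Lemma eq_ffun_ord (T : Type) (t : nat) (f g : nat -> T) :
  [ffun s : 'I_t => f s] = [ffun s : 'I_t => g s] ->
  forall s, s < t -> f s = g s.
Proof.
move=> fg s st.
by have := congr1 (fun h : {ffun _ -> T} => h (Ordinal st)) fg; rewrite !ffunE.
Qed.

Lemma leq_expn_card_separating (P A B : finType) (a0 : A) (S : {set P})
    (f : content P A -> B) :
  (forall x y, agree_on (~: S) x y -> f x = f y -> x = y) ->
  #|A| ^ #|S| <= #|B|.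
Proof.
move=> f_sep.
pose extend (w : {ffun {p | p \in S} -> A}) : content P A :=
  [ffun p => if insub p is Some q then w q else a0].
have extend_inj : injective (f \o extend).
  move=> w1 w2 /= f_w12.
  have e_w12 : extend w1 = extend w2.
    apply: f_sep f_w12 => p; rewrite in_setC => pS.
    by rewrite !ffunE insubF //; apply/negbTE.
  apply/ffunP => q; have := congr1 (fun x : content P A => x (val q)) e_w12.
  by rewrite !ffunE valK.
by have := leq_card _ extend_inj; rewrite card_ffun card_sig.
Qed.

Section LowerBounds.
Variables (N P A : finType) (H : N -> {set P}) (S : scheme N P A).

Lemma card_Wants_le n T :
  1 < #|A| -> decoded H S n T -> #|Wants H n| <= T.*2.
Proof.
move=> A_gt1 dec_n; have [a0 _] := card_gt0P (ltnW A_gt1).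
rewrite -(leq_exp2l _ _ A_gt1) -mul2n expnM -mulnn.
have <- : #|{ffun 'I_T -> A * A}| = (#|A| * #|A|) ^ T.
  by rewrite card_ffun card_prod card_ord.
apply: (@leq_expn_card_separating _ _ _ a0 _ (fun x =>
          [ffun s : 'I_T => (src S s x, d2d S s x)])) => x y xy_Has traces_xy.
have xy_view : same_view H S n T x y.
  split; first by rewrite -[H n]setCK.
  move=> s sT.
  have [src_xy d2d_xy] := eq_ffun_ord (f := fun s => (src S s x, d2d S s x))
                            (g := fun s => (src S s y, d2d S s y)) traces_xy sT.
  by rewrite /received src_xy d2d_xy.
by apply: agree_on_setC_eq xy_Has; apply: dec_n.
Qed.

Hypothesis S_adm : admissible H S.

Lemma same_view_of_src t (x y : content P A) :
  (forall m, agree_on (H m) x y) ->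
  (forall s, s < t -> src S s x = src S s y) ->
  forall m, same_view H S m t x y.
Proof.
move=> xy_Has xy_src; elim: t xy_src => [|t IHt] xy_src m.
  by split.
have view_t m' : same_view H S m' t x y by apply: IHt => s /ltnW; apply: xy_src.
split=> // s; rewrite ltnS leq_eqVlt => /predU1P [-> | st]; last first.
  exact: (view_t m).2.
rewrite /received xy_src //.
case sched_t: (sched S t) => [m'|] //.
by rewrite (S_adm sched_t (view_t m')).
Qed.

Lemma card_Mc_le n T : 1 < #|A| -> decoded H S n T -> #|Mc H| <= T.
Proof.
move=> A_gt1 dec_n; have [a0 _] := card_gt0P (ltnW A_gt1).
have Mc_Wants m : Mc H \subset Wants H m by apply: bigcap_inf.
rewrite -(leq_exp2l _ _ A_gt1).
have <- : #|{ffun 'I_T -> A}| = #|A| ^ T by rewrite card_ffun card_ord.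
apply: (@leq_expn_card_separating _ _ _ a0 _ (fun x =>
          [ffun s : 'I_T => src S s x])) => x y xy_off_Mc src_xy.
have xy_Has m : agree_on (H m) x y.
  by apply: agree_onS xy_off_Mc; rewrite subsetC; apply: Mc_Wants.
have xy_view := same_view_of_src xy_Has
  (eq_ffun_ord (f := src S ^~ x) (g := src S ^~ y) src_xy) n.
apply: agree_on_setC_eq xy_off_Mc.
exact: agree_onS (Mc_Wants n) (dec_n _ _ xy_view).
Qed.

End LowerBounds.

Lemma ceil_max_half_le (R : archiRealFieldType) (a b t : nat) :
  a <= t -> b <= t.*2 ->
  (Num.ceil (Num.max (a%:R : R) (b%:R / 2)) <= t%:Z)%R.
Proof.
move=> a_le b_le; rewrite ceil_le_int ge_max; apply/andP; split.
  by rewrite pmulrn ler_nat.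
by rewrite pmulrn ler_pdivrMr // -natrM ler_nat muln2.
Qed.

Theorem corollary1 (N P A : finType) (H : N -> {set P})
  (hN : 2 <= #|N|)
  (hA : 2 <= #|A|)
  (hwant : forall p : P, exists n : N, p \in Wants H n)
  (S : scheme N P A) (hS : admissible H S) (T : nat)
  (hT : completed H S T) :
  (Num.ceil (Num.max (#|Mc H|%:R : rat)
                     ((\max_(n : N) #|Wants H n|)%:R / 2)) <= T%:Z)%R.
Proof.
have [n0 _] := card_gt0P (ltnW hN).
apply: ceil_max_half_le; first exact: card_Mc_le hA (hT n0).
by apply/bigmax_leqP => n _; apply: card_Wants_le hA (hT n).
Qed.
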